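(* If $c$ is the characteristic of a field (so $c=0$ or $c$ is a prime), then the set of non-negative integers is the disjoint union of $S_c$ and $T_c$.
   Context: Sets $S_c$: $S_0$ is the set of all non-negative integers; $S_2=\{0\}$; $S_3$ is the smallest set of non-negative integers containing $0$ such that whenever $a$ is an even element of $S_3$, the integers $3a,3a+1,3a+4,3a+5$ lie in $S_3$; for a prime $p\ge5$, with $\pi_p$ the largest integer $<p/3$, $S_p$ is the smallest set of non-negative integers containing $[0,2\pi_p]\cap\mathbb Z$ such that whenever $\theta$ is a non-negative even element of $S_p$, all non-negative integers in $[p\theta-2\pi_p-1,p\theta+2\pi_p]$ lie in $S_p$. Sets $T_c$: $T_0=\emptyset$; $T_2$ is the set of all positive integers; for an odd prime $p$, a non-negative integer $a$ lies in $T_p$ iff there exist an odd integer $J$ and $q=p^e$ with $e\ge1$ such that $Jq-\{\frac q3\}\le a<Jq+\{\frac q3\}$, where for an integer $b$, $\{\frac b3\}$ denotes the integer nearest to $b/3$ (i.e. $\frac b3,\frac{b-1}3,\frac{b+1}3$ according as $b\equiv0,1,2\pmod 3$). *)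

From mathcomp Require Import all_boot all_order all_algebra.
Set Implicit Arguments. Unset Strict Implicit. Unset Printing Implicit Defensive.
Import Order.TTheory GRing.Theory Num.Theory.

Inductive S3 : nat -> Prop :=
| S3_0 : S3 0
| S3_0mod (a : nat) : S3 a -> ~~ odd a -> S3 (3 * a)
| S3_1mod (a : nat) : S3 a -> ~~ odd a -> S3 (3 * a + 1)
| S3_4mod (a : nat) : S3 a -> ~~ odd a -> S3 (3 * a + 4)
| S3_5mod (a : nat) : S3 a -> ~~ odd a -> S3 (3 * a + 5).

(* pi_p = largest integer < p/3  (for p not divisible by 3) *)
Definition pi_p (p : nat) : nat := (p - 1) %/ 3.

Inductive Sp (p : nat) : nat -> Prop :=
| Sp_base (n : nat) : n <= 2 * pi_p p -> Sp p n
| Sp_step (theta n : nat) : Sp p theta -> ~~ odd theta ->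
    p * theta <= n + 2 * pi_p p + 1 -> n <= p * theta + 2 * pi_p p -> Sp p n.

Definition S (c n : nat) : Prop :=
  if c == 0 then True
  else if c == 2 then n = 0
  else if c == 3 then S3 n
  else Sp c n.

(* nearest integer to b/3 *)
Definition near3 (b : nat) : nat := b.+1 %/ 3.

Definition Tp (p a : nat) : Prop :=
  exists (J : int) (e : nat), odd `|J|%N /\ (0 < e)%N /\
    let q := (p ^ e)%N in
    (J * q%:Z - (near3 q)%:Z <= a%:Z)%R /\ (a%:Z < J * q%:Z + (near3 q)%:Z)%R.

Definition T (c a : nat) : Prop :=
  if c == 0 then False
  else if c == 2 then is_true (0 < a)%N
  else Tp c a.

(* Both sets are unions of descendant families: every n > 0 is either in the
   first layer of T_c (within near3 c of an odd multiple of c) or is a child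
   p th + s of an even th < n, with s in the offset range of the rule defining
   S_c.  A child lies in S_c iff its parent does, by that rule; it lies in T_c
   iff its parent does, because multiplying by p maps the layer-e windows
   around odd multiples of p^e onto the layer-(e+1) windows around odd
   multiples of p^(e+1), up to the offset s.  Strong induction on n then shows
   that exactly one of S_c, T_c contains n. *)

From mathcomp Require Import all_boot all_order all_algebra zify.
Import Order.TTheory GRing.Theory Num.Theory.

Set Implicit Arguments.
Unset Strict Implicit.
Unset Printing Implicit Defensive.

Section DescentPartition.

Variables (S T : nat -> Prop) (child : nat -> nat -> Prop).
Hypotheses (S0 : S 0) (notT0 : ~ T 0).
Hypothesis S_parent : forall n, S n -> exists2 th, S th & child th n.
Hypothesis S_child : forall th n, S th -> child th n -> S n.
Hypothesis child_lt : forall th n, child th n -> 0 < n -> th < n.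
Hypothesis T_child : forall th n, child th n -> (T n <-> T th).
Hypothesis child_or_T : forall n, (exists th, child th n) \/ T n.

Lemma descent_partition n : (S n \/ T n) /\ ~ (S n /\ T n).
Proof.
elim/ltn_ind: n => n IH.
have [-> | n_gt0] := posnP n; first by split; [left | case].
split.
- case: (child_or_T n) => [[th chn] | Tn]; last by right.
  case: (IH th (child_lt chn n_gt0)).1 => [Sth | Tth].
  + by left; apply: S_child Sth chn.
  + by right; rewrite (T_child chn).
- case=> /S_parent [th Sth chn] Tn.
  apply: (IH th (child_lt chn n_gt0)).2; split => //.
  by rewrite -(T_child chn).
Qed.

End DescentPartition.

Lemma near3_spec q : ~~ (3 %| q) -> 3 * near3 q + 1 = q \/ 3 * near3 q = q + 1.
Proof. by rewrite /near3; lia. Qed.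

Lemma near3_3pow e : near3 (3 ^ e.+1) = 3 ^ e.
Proof. by rewrite /near3 expnS; lia. Qed.

Lemma pi_p_spec p : ~~ (3 %| p) -> p = 3 * pi_p p + 1 \/ p = 3 * pi_p p + 2.
Proof. by rewrite /pi_p; lia. Qed.

Definition near_odd_multiple (q : nat) (a : int) : Prop :=
  exists J : int, odd `|J| /\
    (J * q%:Z - (near3 q)%:Z <= a)%R /\ (a < J * q%:Z + (near3 q)%:Z)%R.

Lemma Tp_near_odd_multiple p a :
  Tp p a <-> exists2 e, 0 < e & near_odd_multiple (p ^ e) a%:Z.
Proof.
split=> [[J [e [oJ [e_gt0 win]]]] | [e e_gt0 [J [oJ win]]]]; last by exists J, e.
by exists e => //; exists J.
Qed.

Lemma near_odd_multiple1 a : ~ near_odd_multiple 1 a.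
Proof. by case=> J [_]; rewrite /near3 /=; lia. Qed.

Lemma near_odd_multiple0 q : ~ near_odd_multiple q 0.
Proof.
case=> J [oJ]; rewrite /near3.
have [J_ge1 | J_le_m1] : (1 <= J \/ J <= -1)%R by lia.
all: nia.
Qed.

Lemma Tp0 p : ~ Tp p 0.
Proof. by rewrite Tp_near_odd_multiple => -[e _ /near_odd_multiple0]. Qed.

(* If [th] is at odd offset [t] from [J * q], then [p * th + s] is at offset
   [p * t + s] from [J * (p * q)]; this says the two windows match. *)
Definition window_scaling (p : nat) (s : int) (r r' : nat) : Prop :=
  forall t : int, odd `|t| ->
    (- r%:Z <= t < r%:Z)%R <-> (- r'%:Z <= p%:Z * t + s < r'%:Z)%R.

Lemma near_odd_multiple_scale p q s th :
  odd q -> ~~ odd th -> window_scaling p s (near3 q) (near3 (p * q)) ->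
  near_odd_multiple (p * q) (p%:Z * th%:Z + s)%R <-> near_odd_multiple q th%:Z.
Proof.
move=> oq eth win.
have odd_offset J : odd `|J| -> odd `|(th%:Z - J * q%:Z)%R|.
  move=> oJ; have : odd `|(J * q%:Z)%R| by rewrite abszM oddM oJ.
  lia.
split=> -[J [oJ win_J]]; exists J; split=> //; have /win := odd_offset J oJ; lia.
Qed.

Lemma Tp_scale p th n : odd p -> ~~ odd th ->
  (forall e, window_scaling p (n%:Z - p%:Z * th%:Z)%R (near3 (p ^ e)) (near3 (p ^ e.+1))) ->
  Tp p n <-> Tp p th.
Proof.
move=> op eth win; rewrite !Tp_near_odd_multiple.
have scale e : near_odd_multiple (p ^ e.+1) n <-> near_odd_multiple (p ^ e) th.
  have opq : odd (p ^ e) by rewrite oddX op orbT.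
  have := win e; rewrite expnS => /(near_odd_multiple_scale opq eth).
  by rewrite addrC subrK.
split=> -[e e_gt0].
- case: e e_gt0 => // [[|e]] _ /scale; first by move/near_odd_multiple1.
  by exists e.+1.
- by move/scale; exists e.+1.
Qed.

Lemma window_scaling3 e s : (s = 0 \/ s = 1 \/ s = 4 \/ s = 5)%R ->
  window_scaling 3 s (near3 (3 ^ e)) (near3 (3 ^ e.+1)).
Proof.
move=> s_offset t ot; rewrite near3_3pow.
case: e => [|e]; first by rewrite expn0 /near3 /=; lia.
have o3e : odd (3 ^ e) by rewrite oddX orbT.
by rewrite near3_3pow expnS; lia.
Qed.

Lemma window_scaling_gt4 p q s : 4 < p -> ~~ (3 %| p * q) -> odd q ->
  (- (2 * pi_p p + 1)%:Z <= s <= (2 * pi_p p)%:Z)%R ->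
  window_scaling p s (near3 q) (near3 (p * q)).
Proof.
move=> p_gt4 pq3 oq s_range t ot.
have [p3 q3] : ~~ (3 %| p) /\ ~~ (3 %| q).
  by move: pq3; rewrite Euclid_dvdM // negb_or => /andP.
have hr := near3_spec q3; have hr' := near3_spec pq3; have pk := pi_p_spec p3.
move: (near3 q) (near3 (p * q)) (pi_p p) hr hr' pk s_range => r r' k hr hr' pk s_range.
have r_even : ~~ odd r by lia.
(* [3 (r' - p r)] is [+-p +-1], a multiple of 3 *)
have drift : (`|r'%:Z - (p * r)%:Z| <= (p - 2 * k - 1)%:Z)%R.
  case: hr => hq; first by rewrite -hq in hr'; lia.
  have : 3 * (p * r) = p * q + p by rewrite mulnCA hq mulnDr muln1.
  lia.
have p_gt0 : (0 < p%:Z)%R by lia.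
have [t_lo | [t_mid | t_hi]] :
  (t <= - r%:Z - 1 \/ - r%:Z + 1 <= t <= r%:Z - 1 \/ r%:Z + 1 <= t)%R by lia.
- have : (p%:Z * t <= p%:Z * (- r%:Z - 1))%R by rewrite ler_pM2l.
  lia.
- have : (p%:Z * (- r%:Z + 1) <= p%:Z * t <= p%:Z * (r%:Z - 1))%R.
    by rewrite !ler_pM2l.
  lia.
- have : (p%:Z * (r%:Z + 1) <= p%:Z * t)%R by rewrite ler_pM2l.
  lia.
Qed.

Definition Sp_child p th n :=
  ~~ odd th /\ p * th <= n + 2 * pi_p p + 1 /\ n <= p * th + 2 * pi_p p.

Lemma Sp_child_or_Tp p n : ~~ (3 %| p) -> (exists th, Sp_child p th n) \/ Tp p n.
Proof.
move=> p3; have pk := pi_p_spec p3; have rp := near3_spec p3.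
have [x [m [-> m_lt]]] : exists x m, n = 2 * p * x + m /\ m < 2 * p.
  exists (n %/ (2 * p)), (n %% (2 * p)).
  by rewrite mulnC -divn_eq ltn_mod; split => //; lia.
have [m_lo | m_hi] := leqP m (2 * pi_p p).
  by left; exists (2 * x); rewrite /Sp_child; lia.
have [m_top | m_mid] := leqP (2 * p - 2 * pi_p p - 1) m.
  by left; exists (2 * x + 2); rewrite /Sp_child; lia.
right; rewrite Tp_near_odd_multiple; exists 1 => //.
by exists (2 * x + 1)%:Z%R; rewrite expn1; lia.
Qed.

Lemma Sp_Tp_partition p n : 4 < p -> odd p -> ~~ (3 %| p) ->
  (Sp p n \/ Tp p n) /\ ~ (Sp p n /\ Tp p n).
Proof.
move=> p_gt4 op p3; have pk := pi_p_spec p3.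
apply: (descent_partition (child := Sp_child p)) => [||{}n|th {}n|th {}n|th {}n|{}n].
- exact: Sp_base.
- exact: Tp0.
- case=> [m m_le | th m Sth eth lo hi]; last by exists th.
  by exists 0; [apply: Sp_base | rewrite /Sp_child; lia].
- by move=> Sth [eth [lo hi]]; apply: Sp_step Sth eth lo hi.
- by rewrite /Sp_child; nia.
- move=> [eth offset]; apply: Tp_scale => // e.
  rewrite expnS; apply: window_scaling_gt4 => //; last by lia.
    by rewrite -expnS Euclid_dvdX // negb_and p3.
  by rewrite oddX op orbT.
- exact: Sp_child_or_Tp.
Qed.

Definition S3_child th n :=
  ~~ odd th /\ (n = 3 * th \/ n = 3 * th + 1 \/ n = 3 * th + 4 \/ n = 3 * th + 5).

Lemma S3_child_or_T3 n : (exists th, S3_child th n) \/ Tp 3 n.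
Proof.
have [x [m [-> m_lt]]] : exists x m, n = 6 * x + m /\ m < 6.
  by exists (n %/ 6), (n %% 6); lia.
have [m23 | m_other] := boolP ((m == 2) || (m == 3)).
  right; rewrite Tp_near_odd_multiple; exists 1 => //.
  by exists (2 * x + 1)%:Z%R; rewrite expn1 /near3; lia.
by left; exists (2 * x); rewrite /S3_child; lia.
Qed.

Lemma S3_T3_partition n : (S3 n \/ Tp 3 n) /\ ~ (S3 n /\ Tp 3 n).
Proof.
apply: (descent_partition (child := S3_child)) => [||{}n|th {}n|th {}n|th {}n|{}n].
- exact: S3_0.
- exact: Tp0.
- case=> [|a Sa ea|a Sa ea|a Sa ea|a Sa ea];
    [exists 0; first exact: S3_0 | exists a => // ..]; rewrite /S3_child; lia.
- by move=> Sth [eth [|[|[|]]] ->]; constructor.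
- by rewrite /S3_child; lia.
- by move=> [eth offset]; apply: Tp_scale => // e; apply: window_scaling3; lia.
- exact: S3_child_or_T3.
Qed.

Theorem theorem6p1 (c : nat) (hc : c = 0 \/ prime c) :
  forall n : nat, (S c n \/ T c n) /\ ~ (S c n /\ T c n).
Proof.
move=> n; rewrite /S /T.
case: hc => [-> | pc] /=; first by split; [left | case].
have -> : (c == 0) = false by case: c pc.
have [_ | c2] := eqVneq c 2.
  by case: n => [|n]; split; [left | case | right | case].
have [-> | c3] := eqVneq c 3; first exact: S3_T3_partition.
apply: Sp_Tp_partition.
- by move: pc c2 c3; case: c => [|[|[|[|[|c]]]]].
- by case: (even_prime pc) => [c_eq2 | //]; rewrite c_eq2 in c2.
- by rewrite dvdn_prime2 // eq_sym.
Qed.
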